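(* Let $(V,\cdot)$ be a nondegenerate intersection pairing of odd type that is not positive definite. Then there exists $u\in V$ with $u\cdot u=-n<0$ such that $u$ is ordinary (indeed $u\in 2V$) and $n-1$ is not of the form $4^a(8b+7)$ for nonnegative integers $a,b$.
   Context: An intersection pairing is a finitely generated free abelian group $V$ with a symmetric bilinear form $V\times V\to\mathbf{Z}$, $(u,w)\mapsto u\cdot w$; nondegenerate means the adjoint $V\to\mathrm{Hom}(V,\mathbf{Z})$ has nonzero determinant. It has odd type if $w\cdot w$ is odd for some $w\in V$. Positive definite means $u\cdot u>0$ for all $u\neq 0$. An element $v\in V$ is characteristic if $v\cdot w\equiv w\cdot w \pmod 2$ for all $w\in V$, and ordinary otherwise. *)

From mathcomp Require Import all_boot all_order all_algebra.
Set Implicit Arguments. Unset Strict Implicit. Unset Printing Implicit Defensive.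
Import Order.TTheory GRing.Theory Num.Theory.
Local Open Scope ring_scope.

(* An intersection pairing on a free abelian group of rank r: V = Z^r (row
   vectors 'rV[int]_r), with symmetric bilinear form given by a symmetric
   integer Gram matrix Q : u . w = u Q w^T. *)
Definition ipair (r : nat) (Q : 'M[int]_r) (u w : 'rV[int]_r) : int :=
  (u *m Q *m w^T) 0 0.

Definition ip_symmetric (r : nat) (Q : 'M[int]_r) : Prop := Q^T = Q.

Definition ip_nondegenerate (r : nat) (Q : 'M[int]_r) : Prop := \det Q != 0.

Definition ip_odd_type (r : nat) (Q : 'M[int]_r) : Prop :=
  exists w : 'rV[int]_r, ~~ (2 %| ipair Q w w)%Z.

Definition ip_positive_definite (r : nat) (Q : 'M[int]_r) : Prop :=
  forall u : 'rV[int]_r, u != 0 -> 0 < ipair Q u u.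

Definition ip_characteristic (r : nat) (Q : 'M[int]_r) (v : 'rV[int]_r) : Prop :=
  forall w : 'rV[int]_r, (ipair Q v w = ipair Q w w %[mod 2])%Z.

Definition ip_ordinary (r : nat) (Q : 'M[int]_r) (v : 'rV[int]_r) : Prop :=
  ~ ip_characteristic Q v.

From mathcomp Require Import all_boot all_order all_algebra.
From mathcomp Require Import zify ring.
From Stdlib Require Import Classical.
Import Order.TTheory GRing.Theory Num.Theory.
Set Implicit Arguments. Unset Strict Implicit.
Local Open Scope ring_scope.

(* An indefinite nondegenerate form has a negative vector: either some nonzero
   x has x.x < 0, or some nonzero x is isotropic, and then x.z <> 0 for some z
   makes (t x + z).(t x + z) = 2t (x.z) + z.z negative for a suitable t.  If a
   negative v has v.v even, then for y with y.y odd, (k v + y).(k v + y) is odd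
   and negative for k large.  So some w has w.w = -m with m odd; u = 2w then
   has u.u = -4m, is ordinary since u.y is even while y.y is odd, and
   4m - 1 = 3 mod 8 is neither 7 mod 8 nor divisible by 4. *)

Lemma linear_neg_witness (b c : int) : b != 0 -> exists k, 2 * k * b + c < 0.
Proof. by move=> b_nz; exists (- b * (c * c + 1)); nia. Qed.

Lemma quadratic_neg_witness (a b c : int) :
  a < 0 -> exists k, k * k * a + 2 * k * b + c < 0.
Proof.
(* k >= 2|b| + |c| + 1, so that k^2 a + 2kb <= -k (|c| + 1). *)
move=> a_neg; set k := 2 * b * b + c * c + 1; exists k.
have k_pos : 1 <= k by rewrite /k; nia.
have k_big : c * c + 1 <= k - 2 * b by rewrite /k; nia.
have k2a_le : k * k * a <= - (k * k) by nia.
have c_lt : c < c * c + 1 by nia.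
nia.
Qed.

Lemma four_mul_odd_subn1_not_legendre (m : nat) :
  odd m -> ~ (exists a b : nat, (4 * m - 1)%N = (4 ^ a * (8 * b + 7))%N).
Proof.
move=> m_odd [[|a] [b]]; first by rewrite expn0 mul1n; lia.
by rewrite expnS; lia.
Qed.

Section IntersectionPairing.
Variables (r : nat) (Q : 'M[int]_r).

Lemma ipairDl u v w : ipair Q (u + v) w = ipair Q u w + ipair Q v w.
Proof. by rewrite /ipair !mulmxDl mxE. Qed.

Lemma ipairZl (a : int) u w : ipair Q (a *: u) w = a * ipair Q u w.
Proof. by rewrite /ipair -!scalemxAl mxE. Qed.

Lemma ipair_nondeg_witness x :
  ip_nondegenerate Q -> x != 0 -> exists z, ipair Q x z != 0.
Proof.
move=> nd x_nz.
have ipair_delta j : ipair Q x (delta_mx 0 j) = (x *m Q) 0 j.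
  by rewrite /ipair trmx_delta -colE mxE.
have [/existsP[j xQj] | /existsPn xQ0] := boolP [exists j, (x *m Q) 0 j != 0].
  by exists (delta_mx 0 j); rewrite ipair_delta.
have : x *m Q *m \adj Q = 0.
  suff -> : x *m Q = 0 by rewrite mul0mx.
  by apply/rowP => j; rewrite [RHS]mxE; apply/eqP/negPn/xQ0.
rewrite -mulmxA mul_mx_adj mul_mx_scalar => /eqP.
by rewrite scalemx_eq0 (negbTE nd) (negbTE x_nz).
Qed.

Lemma ip_ordinary_double w : ip_odd_type Q -> ip_ordinary Q (2%:Z *: w).
Proof. by move=> [y y_odd] /(_ y); rewrite ipairZl; lia. Qed.

Hypothesis sQ : ip_symmetric Q.

Lemma ipairC u w : ipair Q u w = ipair Q w u.
Proof.
rewrite /ipair.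
have -> : (w *m Q *m u^T) 0 0 = (w *m Q *m u^T)^T 0 0 by rewrite [RHS]mxE.
by rewrite !trmx_mul trmxK sQ mulmxA.
Qed.

Lemma ipairDr u v w : ipair Q w (u + v) = ipair Q w u + ipair Q w v.
Proof. by rewrite !(ipairC w) ipairDl. Qed.

Lemma ipairZr (a : int) u w : ipair Q w (a *: u) = a * ipair Q w u.
Proof. by rewrite !(ipairC w) ipairZl. Qed.

Lemma ipair_expand (a : int) x z :
  ipair Q (a *: x + z) (a *: x + z) =
  a * a * ipair Q x x + 2 * a * ipair Q x z + ipair Q z z.
Proof. by rewrite ipairDl !ipairDr !ipairZl !ipairZr (ipairC z x); ring. Qed.

Lemma ipair_neg_exists :
  ip_nondegenerate Q -> ~ ip_positive_definite Q -> exists v, ipair Q v v < 0.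
Proof.
move=> nd not_pd.
have [x /andP[x_nz]] : exists x, (x != 0) && (ipair Q x x <= 0).
  apply: NNPP => none; apply: not_pd => u u_nz; rewrite ltNge; apply/negP.
  by move=> u_nonpos; apply: none; exists u; rewrite u_nz.
rewrite le_eqVlt => /orP[/eqP x_iso |]; last by exists x.
have [z xz_nz] := ipair_nondeg_witness nd x_nz.
have [k neg] := linear_neg_witness (ipair Q z z) xz_nz.
by exists (k *: x + z); rewrite ipair_expand x_iso mulr0 add0r.
Qed.

Lemma ipair_odd_neg_exists :
  ip_nondegenerate Q -> ip_odd_type Q -> ~ ip_positive_definite Q ->
  exists w, ipair Q w w < 0 /\ ~~ (2 %| ipair Q w w)%Z.
Proof.
move=> nd [y y_odd] not_pd.
have [v v_neg] := ipair_neg_exists nd not_pd.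
have [v_even | ] := boolP (2 %| ipair Q v v)%Z; last by exists v.
have [k neg] := quadratic_neg_witness (ipair Q v y) (ipair Q y y) v_neg.
exists (k *: v + y); rewrite ipair_expand; split=> //.
by move: v_even y_odd; lia.
Qed.

End IntersectionPairing.

Theorem mainTheorem6 (r : nat) (Q : 'M[int]_r) :
  ip_symmetric Q -> ip_nondegenerate Q -> ip_odd_type Q -> ~ ip_positive_definite Q ->
  exists (u : 'rV[int]_r) (n : nat),
    [/\ ipair Q u u = - (n%:Z), (0 < n)%N,
        ip_ordinary Q u,
        (exists w : 'rV[int]_r, u = 2%:Z *: w) &
        ~ (exists a b : nat, (n - 1)%N = (4 ^ a * (8 * b + 7))%N)].
Proof.
move=> sQ nd odd_type not_pd.
have [w [w_neg w_odd]] := ipair_odd_neg_exists sQ nd odd_type not_pd.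
set m := absz (ipair Q w w).
have ww_m : ipair Q w w = - m%:Z by rewrite /m; lia.
have m_odd : odd m by move: w_odd; rewrite ww_m; lia.
exists (2%:Z *: w), (4 * m)%N; split.
- by rewrite ipairZl ipairZr // ww_m; lia.
- by move: m_odd; lia.
- exact: ip_ordinary_double.
- by exists w.
- exact: four_mul_odd_subn1_not_legendre.
Qed.
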